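(* If $\Gamma\vdash^k t:\sigma$ is derivable in $\cap J$, then $t\in SN_{d\beta}$ and $\|t\|_{d\beta}\le k$, where $\|t\|_{d\beta}$ is the maximal length of a $\to_{d\beta}$-reduction sequence starting at $t$.
   Context: Terms $\mathtt T_J$: $t,u,r ::= x \mid \lambda x.t \mid t(u,y.r)$ ($y$ bound in $r$), up to $\alpha$-equivalence; $\{u/x\}t$ capture-avoiding substitution. List contexts $\mathtt D ::= \Diamond \mid t(u,y.\mathtt D)$. Distant beta: $\mathtt D\langle\lambda x.t\rangle(u,y.r) \mapsto_{d\beta} \{\{u/x\}\mathtt D\langle t\rangle/y\}r$ (variables bound by $\mathtt D$ not free in $u$, $x$ not in $\mathtt D$), $\to_{d\beta}$ its closure under all contexts; $SN_{d\beta}$ the set of terms with no infinite $\to_{d\beta}$-sequence. System $\cap J$: types $\sigma,\tau ::= \alpha \mid \mathcal M\to\sigma$, $\mathcal M=[\sigma_i]_{i\in I}$ a finite possibly empty multiset; $\sqcup$ multiset union; environments map variables to multisets, $\wedge$ pointwise union, $\Gamma;x:\mathcal M$ extension with $x\notin\mathrm{dom}\,\Gamma$. $\mathrm{ch}(\mathcal M)=\mathcal M$ if $\mathcal M\ne[\,]$, $\mathrm{ch}([\,])=[\tau]$ for an arbitrary $\tau$. Rules: (var) $x:[\sigma]\vdash x:\sigma$; (abs) from $\Gamma;x:\mathcal M\vdash t:\sigma$ infer $\Gamma\vdash\lambda x.t:\mathcal M\to\sigma$; (many) from $(\Gamma_i\vdash t:\sigma_i)_{i\in I}$, $I\ne\emptyset$,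 infer $\wedge_i\Gamma_i\vdash t:[\sigma_i]_{i\in I}$; (app) from $\Gamma\vdash t:\mathrm{ch}([\mathcal M_i\to\tau_i]_{i\in I})$, $\Delta\vdash u:\mathrm{ch}(\sqcup_i\mathcal M_i)$, $\Lambda;y:[\tau_i]_{i\in I}\vdash r:\sigma$ infer $\Gamma\wedge\Delta\wedge\Lambda\vdash t(u,y.r):\sigma$. $\vdash^k$ indicates a derivation of size $k$ = number of rule instances other than (many). *)

(* Terms of T_J in de Bruijn representation (terms up to alpha). *)
From Stdlib Require Import List Arith Permutation.
Import ListNotations.

(** Terms: x | \x.t | t(u, y.r)  -- in App t u r, r is under one binder (y). *)
Inductive term : Type :=
| Var : nat -> term
| Lam : term -> term
| App : term -> term -> term -> term.

Fixpoint lift (k c : nat) (t : term) : term :=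
  match t with
  | Var n => Var (if n <? c then n else n + k)
  | Lam t' => Lam (lift k (S c) t')
  | App t1 t2 r => App (lift k c t1) (lift k c t2) (lift k (S c) r)
  end.

Fixpoint subst (s : term) (j : nat) (t : term) : term :=
  match t with
  | Var n => if n <? j then Var n
             else if n =? j then lift j 0 s else Var (n - 1)
  | Lam t' => Lam (subst s (S j) t')
  | App t1 t2 r => App (subst s j t1) (subst s j t2) (subst s (S j) r)
  end.

(** List contexts D ::= <> | t(u, y.D) *)
Inductive lctx : Type :=
| Hole : lctx
| LApp : term -> term -> lctx -> lctx.

Fixpoint plug (D : lctx) (t : term) : term :=
  match D with
  | Hole => t
  | LApp a b D' => App a b (plug D' t)
  end.

Fixpoint depth (D : lctx) : nat :=
  match D with
  | Hole => 0
  | LApp _ _ D' => S (depth D')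
  end.

(** Distant beta at the root:
    D<\x.t>(u, y.r) |-> {{u/x}D<t>/y} r.
    The side conditions (variables bound by D not free in u, x not in D)
    are realised by lifting u past the depth(D) binders of D. *)
Inductive dbeta_root : term -> term -> Prop :=
| DBeta : forall D t u r,
    dbeta_root (App (plug D (Lam t)) u r)
               (subst (plug D (subst (lift (depth D) 0 u) 0 t)) 0 r).

Inductive dbeta : term -> term -> Prop :=
| st_root : forall t t', dbeta_root t t' -> dbeta t t'
| st_lam : forall t t', dbeta t t' -> dbeta (Lam t) (Lam t')
| st_app1 : forall t t' u r, dbeta t t' -> dbeta (App t u r) (App t' u r)
| st_app2 : forall t u u' r, dbeta u u' -> dbeta (App t u r) (App t u' r)
| st_app3 : forall t u r r', dbeta r r' -> dbeta (App t u r) (App t u r').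

Definition SN (t : term) : Prop := Acc (fun t' t => dbeta t t') t.

Inductive dbeta_n : nat -> term -> term -> Prop :=
| dn_refl : forall t, dbeta_n 0 t t
| dn_step : forall n t t' t'', dbeta t t' -> dbeta_n n t' t'' -> dbeta_n (S n) t t''.

Definition maxred_le (t : term) (k : nat) : Prop :=
  forall n t', dbeta_n n t t' -> n <= k.

(** Types: sigma ::= alpha | M -> sigma, with multisets represented as lists
    considered up to permutation (and, recursively, up to type equivalence). *)
Inductive ty : Type :=
| TVar : nat -> ty
| Arr : list ty -> ty -> ty.

Inductive tyeq : ty -> ty -> Prop :=
| tyeq_var : forall a, tyeq (TVar a) (TVar a)
| tyeq_arr : forall M N N' s s',
    Permutation N' N -> Forall2 tyeq M N' -> tyeq s s' -> tyeq (Arr M s) (Arr N s').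

Definition meq (M N : list ty) : Prop :=
  exists N', Permutation N' N /\ Forall2 tyeq M N'.

(** ch(M) = M if M <> [], ch([]) = [tau] (tau supplied explicitly) *)
Definition ch (tau : ty) (M : list ty) : list ty :=
  match M with [] => [tau] | _ => M end.

Definition env := nat -> list ty.

Definition env_union (G D : env) : env := fun n => G n ++ D n.

Definition scons (M : list ty) (G : env) : env :=
  fun n => match n with 0 => M | S n' => G n' end.

Definition env_single (x : nat) (s : ty) : env :=
  fun n => if n =? x then [s] else [].

(** System cap-J with derivation sizes (the (many) rule is not counted). *)
Inductive typ : env -> term -> ty -> nat -> Prop :=
| T_var : forall x s, typ (env_single x s) (Var x) s 1
| T_abs : forall G M t s k,
    typ (scons M G) t s k -> typ G (Lam t) (Arr M s) (S k)
| T_app : forall (L : list (list ty * ty)) tau0 tau1 G D Lr N t u r s kt ku kr,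
    mtyp G t (ch tau0 (map (fun p => Arr (fst p) (snd p)) L)) kt ->
    mtyp D u N ku ->
    meq N (ch tau1 (concat (map fst L))) ->
    meq (Lr 0) (map snd L) ->
    typ Lr r s kr ->
    typ (env_union G (env_union D (fun n => Lr (S n)))) (App t u r) s (S (kt + ku + kr))
with mtyp : env -> term -> list ty -> nat -> Prop :=
| M_one : forall G t s k, typ G t s k -> mtyp G t [s] k
| M_cons : forall G G' t s M k k',
    typ G t s k -> mtyp G' t M k' -> mtyp (env_union G G') t (s :: M) (k + k').

From Stdlib Require Import List Arith Permutation Lia FunctionalExtensionality.
Import ListNotations.

(* Subject reduction with a strictly decreasing size: if G |-^k t : s and
   t ->dβ t', then t' has a derivation of size k' < k, in a sub-environment of
   G and at a type equivalent to s.  Strong normalisation and ||t|| <= k then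
   follow by well-founded induction on k.

   Reduction may discard typed occurrences (the argument of a redex whose body
   does not use y, or the derivations chosen by ch), so the invariant lives in
   a relaxed system where a binder may use only part of the multiset declared
   for it and multiple typings may be empty; cap-J embeds into it with the same
   sizes.  Substitution is exactly quantitative: replacing the m axioms typing
   a variable by derivations of the argument adds their sizes and removes m.
   Contracting D<\x.t>(u, y.r) therefore costs nothing for the arguments and
   removes the (app) rule of the redex together with the (abs) rule of every
   copy of \x.t. *)

(** * Multisets of types *)

Fixpoint ty_nested_ind (P : ty -> Prop) (HV : forall n, P (TVar n))
  (HA : forall M s, Forall P M -> P s -> P (Arr M s)) (a : ty) : P a :=
  match a with
  | TVar n => HV n
  | Arr M s =>
      HA M s
        ((fix go (l : list ty) : Forall P l :=
            match l with
            | [] => Forall_nil P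
            | b :: l' => Forall_cons b (ty_nested_ind P HV HA b) (go l')
            end) M)
        (ty_nested_ind P HV HA s)
  end.

Lemma Forall2_sym_on {A} (R : A -> A -> Prop) l1 l2 :
  Forall (fun a => forall b, R a b -> R b a) l1 -> Forall2 R l1 l2 -> Forall2 R l2 l1.
Proof. intros Hsym H12; induction H12; inversion Hsym; subst; auto. Qed.

Lemma Forall2_trans_on {A} (R : A -> A -> Prop) l1 l2 l3 :
  Forall (fun a => forall b c, R a b -> R b c -> R a c) l1 ->
  Forall2 R l1 l2 -> Forall2 R l2 l3 -> Forall2 R l1 l3.
Proof.
  intros Htrans H12; revert l3; induction H12; intros l3 H23;
    inversion Htrans; inversion H23; subst; eauto.
Qed.

Notation tyeqs := (Forall2 tyeq).

Lemma tyeq_refl a : tyeq a a.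
Proof.
  induction a as [n | M s IHM IHs] using ty_nested_ind; [constructor |].
  apply tyeq_arr with M; [reflexivity | | exact IHs].
  induction IHM; constructor; auto.
Qed.

Lemma tyeq_sym a b : tyeq a b -> tyeq b a.
Proof.
  revert b; induction a as [n | M s IHM IHs] using ty_nested_ind; intros b Hab;
    inversion Hab as [| ? N N' ? s' HN' HM Hs]; subst; [constructor |].
  destruct (Permutation_Forall2 HN' (Forall2_sym_on _ _ _ IHM HM)) as [M' [HM' HNM']].
  apply tyeq_arr with M'; auto using Permutation_sym.
Qed.

Lemma tyeq_trans a b c : tyeq a b -> tyeq b c -> tyeq a c.
Proof.
  revert b c; induction a as [n | M s IHM IHs] using ty_nested_ind; intros b c Hab Hbc;
    inversion Hab as [| ? N N' ? s' HN' HM Hs]; subst;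
    inversion Hbc as [| ? P P' ? s'' HP' HN Hs']; subst; [constructor |].
  destruct (Permutation_Forall2 (Permutation_sym HN') HN) as [P'' [HP'' HN'P'']].
  apply tyeq_arr with P''; eauto using Permutation_trans, Permutation_sym, Forall2_trans_on.
Qed.

Lemma tyeqs_refl M : tyeqs M M.
Proof. induction M; constructor; auto using tyeq_refl. Qed.

Lemma tyeq_Arr_r M s s' : tyeq s s' -> tyeq (Arr M s) (Arr M s').
Proof. intros H; apply tyeq_arr with M; auto using tyeqs_refl. Qed.

Lemma tyeqs_sym M N : tyeqs M N -> tyeqs N M.
Proof. induction 1; constructor; auto using tyeq_sym. Qed.

Lemma tyeqs_trans M N P : tyeqs M N -> tyeqs N P -> tyeqs M P.
Proof.
  intros HMN; revert P; induction HMN; intros P HNP; inversion HNP; subst;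
    constructor; eauto using tyeq_trans.
Qed.

Lemma meq_refl M : meq M M.
Proof. exists M; auto using tyeqs_refl. Qed.

Lemma meq_sym M N : meq M N -> meq N M.
Proof.
  intros [N' [HN' HMN']].
  destruct (Permutation_Forall2 HN' (tyeqs_sym _ _ HMN')) as [M' [HM' HNM']].
  exists M'; auto using Permutation_sym.
Qed.

Lemma meq_trans M N P : meq M N -> meq N P -> meq M P.
Proof.
  intros [N' [HN' HMN']] [P' [HP' HNP']].
  destruct (Permutation_Forall2 (Permutation_sym HN') HNP') as [P'' [HP'' HN'P'']].
  exists P''; eauto using Permutation_trans, Permutation_sym, tyeqs_trans.
Qed.

Lemma meq_perm M N : Permutation M N -> meq M N.
Proof. exists M; auto using tyeqs_refl. Qed.

Lemma meq_tyeqs M N : tyeqs M N -> meq M N.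
Proof. exists N; auto. Qed.

Lemma meq_app M1 M2 N1 N2 : meq M1 N1 -> meq M2 N2 -> meq (M1 ++ M2) (N1 ++ N2).
Proof.
  intros [N1' [HP1 HF1]] [N2' [HP2 HF2]].
  exists (N1' ++ N2'); auto using Permutation_app, Forall2_app.
Qed.

Lemma meq_length M N : meq M N -> length M = length N.
Proof. intros [N' [HP HF]]; rewrite (Forall2_length HF); apply Permutation_length, HP. Qed.

Lemma meq_nil_l M : meq [] M -> M = [].
Proof. intros H; apply meq_length in H; destruct M; easy. Qed.

Lemma meq_ch tau M N : meq M N -> meq (ch tau M) (ch tau N).
Proof.
  intros H; destruct M as [| a M].
  - rewrite (meq_nil_l _ H); apply meq_refl.
  - destruct N as [| b N]; [apply meq_sym, meq_nil_l in H; discriminate | exact H].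
Qed.

Lemma tyeq_Arr_inv M s b : tyeq (Arr M s) b -> exists N s', b = Arr N s' /\ meq M N /\ tyeq s s'.
Proof. inversion 1; subst; eexists _, _; split; [reflexivity | split; [eexists |]]; eauto. Qed.

Definition msub (M N : list ty) : Prop := exists R, meq (M ++ R) N.

Lemma msub_meq M N : meq M N -> msub M N.
Proof. exists []; rewrite app_nil_r; exact H. Qed.

Lemma msub_perm M N : Permutation M N -> msub M N.
Proof. auto using msub_meq, meq_perm. Qed.

Lemma msub_refl M : msub M M.
Proof. apply msub_meq, meq_refl. Qed.

Lemma msub_trans M N P : msub M N -> msub N P -> msub M P.
Proof.
  intros [R1 H1] [R2 H2]; exists (R1 ++ R2).
  rewrite app_assoc; eapply meq_trans; [apply meq_app; [exact H1 | apply meq_refl] | exact H2].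
Qed.

Lemma msub_app M1 M2 N1 N2 : msub M1 N1 -> msub M2 N2 -> msub (M1 ++ M2) (N1 ++ N2).
Proof.
  intros [R1 H1] [R2 H2]; exists (R1 ++ R2).
  eapply meq_trans; [apply meq_perm | apply meq_app; [exact H1 | exact H2]].
  rewrite <- !app_assoc; apply Permutation_app_head.
  rewrite !app_assoc; apply Permutation_app_tail, Permutation_app_comm.
Qed.

Lemma msub_nil M : msub [] M.
Proof. exists M; apply meq_refl. Qed.

Lemma msub_app_r M N : msub M (M ++ N).
Proof. exists N; apply meq_refl. Qed.

Lemma msub_ch tau M : msub M (ch tau M).
Proof. destruct M; [apply msub_nil | apply msub_refl]. Qed.

Definition arrow (p : list ty * ty) : ty := Arr (fst p) (snd p).

Lemma tyeqs_arrows L M : tyeqs (map arrow L) M ->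
  exists L', M = map arrow L' /\ meq (concat (map fst L)) (concat (map fst L')) /\
    tyeqs (map snd L) (map snd L').
Proof.
  revert M; induction L as [| p L IH]; intros M H; inversion H as [| a b M0 M' Hab HM]; subst.
  - exists []; auto using meq_refl.
  - destruct (IH _ HM) as [L' [-> [HL1 HL2]]].
    destruct (tyeq_Arr_inv _ _ _ Hab) as [N [s' [-> [HN Hs]]]].
    exists ((N, s') :: L'); simpl; auto using meq_app.
Qed.

Lemma tyeqs_ch_arrows tau L M : tyeqs (ch tau (map arrow L)) M ->
  exists tau' L', M = ch tau' (map arrow L') /\
    meq (concat (map fst L)) (concat (map fst L')) /\ tyeqs (map snd L) (map snd L').
Proof.
  destruct L as [| p L]; simpl; intros H.
  - inversion H as [| a b ? ? _ Hnil]; inversion Hnil; subst.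
    exists b, []; auto using meq_refl.
  - destruct (tyeqs_arrows (p :: L) M H) as [[| p' L'] [-> HL]]; [inversion H |].
    exists tau, (p' :: L'); auto.
Qed.

Definition env_empty : env := fun _ => [].
Definition env_meq (G G' : env) : Prop := forall n, meq (G n) (G' n).
Definition env_msub (G G' : env) : Prop := forall n, msub (G n) (G' n).

Lemma env_meq_refl G : env_meq G G.
Proof. intro n; apply meq_refl. Qed.

Lemma env_meq_trans G1 G2 G3 : env_meq G1 G2 -> env_meq G2 G3 -> env_meq G1 G3.
Proof. intros H12 H23 n; eapply meq_trans; eauto. Qed.

Lemma env_meq_union G1 G2 H1 H2 :
  env_meq G1 H1 -> env_meq G2 H2 -> env_meq (env_union G1 G2) (env_union H1 H2).
Proof. intros E1 E2 n; apply meq_app; auto. Qed.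

Ltac decide_nat :=
  repeat match goal with
  | |- context [?a <? ?b] => destruct (Nat.ltb_spec a b)
  | |- context [?a =? ?b] => destruct (Nat.eqb_spec a b)
  end; try lia; try reflexivity.

Definition env_lift (n c : nat) (G : env) : env :=
  fun m => if m <? c then G m else if m <? c + n then [] else G (m - n).

Lemma env_single_neq x s n : n <> x -> env_single x s n = [].
Proof. intros; unfold env_single; decide_nat. Qed.

Definition env_subst (j : nat) (G E : env) : env :=
  fun n => (if n <? j then G n else G (S n)) ++ (if n <? j then [] else E (n - j)).

(** * The relaxed type system *)

Inductive rtyp : env -> term -> ty -> nat -> Prop :=
| R_var : forall x s, rtyp (env_single x s) (Var x) s 1
| R_abs : forall G M M' t s k,
    rtyp (scons M' G) t s k -> msub M' M -> rtyp G (Lam t) (Arr M s) (S k)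
| R_app : forall (L : list (list ty * ty)) tau0 tau1 G D Lr N t u r s kt ku kr,
    rmtyp G t (ch tau0 (map arrow L)) kt ->
    rmtyp D u N ku ->
    meq N (ch tau1 (concat (map fst L))) ->
    msub (Lr 0) (map snd L) ->
    rtyp Lr r s kr ->
    rtyp (env_union G (env_union D (fun n => Lr (S n)))) (App t u r) s (S (kt + ku + kr))
with rmtyp : env -> term -> list ty -> nat -> Prop :=
| RM_nil : forall t, rmtyp env_empty t [] 0
| RM_cons : forall G G' t s M k k',
    rtyp G t s k -> rmtyp G' t M k' -> rmtyp (env_union G G') t (s :: M) (k + k').

Scheme rtyp_ind2 := Induction for rtyp Sort Prop
with rmtyp_ind2 := Induction for rmtyp Sort Prop.
Combined Scheme rtyp_mutind from rtyp_ind2, rmtyp_ind2.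

Scheme typ_ind2 := Induction for typ Sort Prop
with mtyp_ind2 := Induction for mtyp Sort Prop.
Combined Scheme typ_mutind from typ_ind2, mtyp_ind2.

Lemma rtyp_env_ext G G' t s k : rtyp G t s k -> (forall n, G n = G' n) -> rtyp G' t s k.
Proof. intros H E; replace G' with G by (apply functional_extensionality, E); exact H. Qed.

Lemma rmtyp_env_ext G G' t M k : rmtyp G t M k -> (forall n, G n = G' n) -> rmtyp G' t M k.
Proof. intros H E; replace G' with G by (apply functional_extensionality, E); exact H. Qed.

Lemma rtyp_lam G t s k M :
  rtyp G t s k -> msub (G 0) M -> rtyp (fun n => G (S n)) (Lam t) (Arr M s) (S k).
Proof.
  intros H HM; apply R_abs with (G 0); [| exact HM].
  apply (rtyp_env_ext _ _ _ _ _ H); intros []; reflexivity.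
Qed.

Lemma typ_rtyp :
  (forall G t s k, typ G t s k -> rtyp G t s k) /\
  (forall G t M k, mtyp G t M k -> rmtyp G t M k).
Proof.
  apply typ_mutind.
  - intros; apply R_var.
  - intros; econstructor; eauto using msub_refl.
  - intros; econstructor; eauto using msub_meq.
  - intros G t s k _ Hs; rewrite <- Nat.add_0_r.
    apply rmtyp_env_ext with (env_union G env_empty); [repeat constructor; exact Hs |].
    intro n; apply app_nil_r.
  - intros; constructor; assumption.
Qed.

Lemma lift_0 t c : lift 0 c t = t.
Proof.
  revert c; induction t; intros c; simpl; f_equal; auto.
  destruct (n <? c); lia.
Qed.

Lemma lift_lift t a b c : lift a c (lift b c t) = lift (a + b) c t.
Proof.
  revert c; induction t; intros c; simpl; f_equal; auto.
  decide_nat; f_equal; lia.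
Qed.

Lemma rtyp_lift :
  (forall G t s k, rtyp G t s k -> forall n c, rtyp (env_lift n c G) (lift n c t) s k) /\
  (forall G t M k, rmtyp G t M k -> forall n c, rmtyp (env_lift n c G) (lift n c t) M k).
Proof.
  apply rtyp_mutind; simpl.
  - intros x s n c; eapply rtyp_env_ext; [constructor |]; intro i.
    unfold env_lift, env_single; decide_nat; f_equal; lia.
  - intros G M M' t s k _ IH HM' n c.
    econstructor; [eapply rtyp_env_ext; [apply (IH n (S c)) |] | exact HM'].
    intros [| i]; unfold env_lift, scons; decide_nat.
    now replace (S i - n) with (S (i - n)) by lia.
  - intros L tau0 tau1 G D Lr N t u r s kt ku kr _ IHt _ IHu HN HLr _ IHr n c.
    eapply rtyp_env_ext;
      [econstructor; [apply IHt | apply IHu | exact HN | | apply (IHr n (S c))] |].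
    + exact HLr.
    + intro i; unfold env_lift, env_union; decide_nat.
      now replace (S i - n) with (S (i - n)) by lia.
  - intros t n c; eapply rmtyp_env_ext; [constructor |]; intro i.
    unfold env_lift, env_empty; decide_nat.
  - intros G G' t s M k k' _ IHt _ IHM n c.
    eapply rmtyp_env_ext; [constructor; eauto |]; intro i; unfold env_lift, env_union; decide_nat.
Qed.

Record judgment := Judgment { jenv : env; jty : ty; jsize : nat }.

Definition derives (t : term) (d : judgment) : Prop := rtyp (jenv d) t (jty d) (jsize d).

Fixpoint env_sum (ds : list judgment) : env :=
  match ds with
  | [] => env_empty
  | d :: ds' => env_union (jenv d) (env_sum ds')
  end.

Definition size_sum (ds : list judgment) : nat := list_sum (map jsize ds).

Lemma env_sum_app ds1 ds2 n : env_sum (ds1 ++ ds2) n = env_sum ds1 n ++ env_sum ds2 n.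
Proof.
  induction ds1 as [| d ds1 IH]; [reflexivity |].
  simpl; unfold env_union; rewrite IH, app_assoc; reflexivity.
Qed.

Lemma env_sum_perm ds1 ds2 n : Permutation ds1 ds2 -> Permutation (env_sum ds1 n) (env_sum ds2 n).
Proof.
  induction 1; simpl; unfold env_union; eauto using Permutation_app_head, Permutation_trans.
  rewrite !app_assoc; apply Permutation_app_tail, Permutation_app_comm.
Qed.

Lemma size_sum_app ds1 ds2 : size_sum (ds1 ++ ds2) = size_sum ds1 + size_sum ds2.
Proof. unfold size_sum; rewrite map_app; apply list_sum_app. Qed.

Lemma size_sum_perm ds1 ds2 : Permutation ds1 ds2 -> size_sum ds1 = size_sum ds2.
Proof. intros HP; apply Permutation_list_sum, Permutation_map, HP. Qed.

Lemma size_sum_cons d ds : size_sum (d :: ds) = jsize d + size_sum ds.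
Proof. reflexivity. Qed.

Lemma rmtyp_judgments G t M k : rmtyp G t M k ->
  exists ds, Forall (derives t) ds /\ map jty ds = M /\ G = env_sum ds /\ k = size_sum ds.
Proof.
  induction 1 as [t | G G' t s M k k' Hs _ [ds [Hds [<- [-> ->]]]]].
  - exists []; repeat split; constructor.
  - exists (Judgment G s k :: ds); repeat split; constructor; assumption.
Qed.

Lemma tyeqs_map_app_inv A1 A2 ds : tyeqs (A1 ++ A2) (map jty ds) ->
  exists ds1 ds2, ds = ds1 ++ ds2 /\ tyeqs A1 (map jty ds1) /\ tyeqs A2 (map jty ds2).
Proof.
  intros H; destruct (Forall2_app_inv_l _ _ H) as [B1 [B2 [H1 [H2 E]]]].
  destruct (map_eq_app _ _ _ _ E) as [ds1 [ds2 [-> [<- <-]]]].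
  exists ds1, ds2; auto.
Qed.

Lemma tyeqs_nil_judgments ds : tyeqs [] (map jty ds) -> ds = [].
Proof. destruct ds; [reflexivity | inversion 1]. Qed.

Lemma tyeqs_single_judgments s ds : tyeqs [s] (map jty ds) -> exists d, ds = [d] /\ tyeq s (jty d).
Proof.
  destruct ds as [| d [| ? ?]]; inversion 1 as [| ? ? ? ? ? Hnil]; [| inversion Hnil]; eauto.
Qed.

Lemma judgments_select t M ds : Forall (derives t) ds -> msub M (map jty ds) ->
  exists ds', Forall (derives t) ds' /\ tyeqs M (map jty ds') /\
    env_msub (env_sum ds') (env_sum ds) /\ size_sum ds' <= size_sum ds.
Proof.
  intros Hds [R [B [HB HMB]]].
  destruct (Permutation_map_inv _ _ HB) as [ds0 [-> Hds0]].
  destruct (tyeqs_map_app_inv _ _ _ HMB) as [ds1 [ds2 [-> [HM _]]]].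
  apply (Permutation_Forall Hds0), Forall_app in Hds as [Hds1 _].
  exists ds1; repeat split; auto.
  - intro n; eapply msub_trans; [apply msub_app_r with (N := env_sum ds2 n) |].
    rewrite <- env_sum_app; apply msub_perm, env_sum_perm, Permutation_sym, Hds0.
  - rewrite (size_sum_perm _ _ Hds0), size_sum_app; lia.
Qed.

Lemma rmtyp_select G t N k M : rmtyp G t N k -> msub M N ->
  exists ds, Forall (derives t) ds /\ tyeqs M (map jty ds) /\
    env_msub (env_sum ds) G /\ size_sum ds <= k.
Proof.
  intros HN HM; destruct (rmtyp_judgments _ _ _ _ HN) as [ds0 [Hds0 [<- [-> ->]]]].
  exact (judgments_select _ _ _ Hds0 HM).
Qed.

Lemma tyeqs_concat_judgments Ms ds : tyeqs (concat Ms) (map jty ds) ->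
  exists dss, ds = concat dss /\ Forall2 (fun M ds => tyeqs M (map jty ds)) Ms dss.
Proof.
  revert ds; induction Ms as [| M Ms IH]; simpl; intros ds H.
  - apply tyeqs_nil_judgments in H as ->; exists []; auto.
  - destruct (tyeqs_map_app_inv _ _ _ H) as [ds1 [ds2 [-> [H1 H2]]]].
    destruct (IH _ H2) as [dss [-> Hdss]]; exists (ds1 :: dss); auto.
Qed.

(** * Substitution *)

Lemma env_subst_union j G1 G2 ds1 ds2 :
  env_meq (env_union (env_subst j G1 (env_sum ds1)) (env_subst j G2 (env_sum ds2)))
          (env_subst j (env_union G1 G2) (env_sum (ds1 ++ ds2))).
Proof.
  intro n; apply meq_perm; unfold env_subst, env_union; rewrite env_sum_app.
  destruct (n <? j); [rewrite !app_nil_r; reflexivity |].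
  rewrite <- !app_assoc; apply Permutation_app_head, Permutation_app_swap_app.
Qed.

(* The |G j| axioms typing index j are traded for the derivations ds of u. *)
Definition subst_sound (t : term) : Prop :=
  forall G a k, rtyp G t a k ->
  forall j u ds, Forall (derives u) ds -> tyeqs (G j) (map jty ds) ->
  exists G' a' k', rtyp G' (subst u j t) a' k' /\ tyeq a a' /\
    env_meq G' (env_subst j G (env_sum ds)) /\ k' + length (G j) = k + size_sum ds.

Lemma rmtyp_subst t : subst_sound t ->
  forall G M k, rmtyp G t M k ->
  forall j u ds, Forall (derives u) ds -> tyeqs (G j) (map jty ds) ->
  exists G' M' k', rmtyp G' (subst u j t) M' k' /\ tyeqs M M' /\
    env_meq G' (env_subst j G (env_sum ds)) /\ k' + length (G j) = k + size_sum ds.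
Proof.
  intros Ht G M k H; induction H as [t | G1 G2 t s M k1 k2 Hs _ IH];
    intros j u ds Hds Hj.
  - apply tyeqs_nil_judgments in Hj as ->.
    exists env_empty, [], 0; repeat split; try constructor.
    intro n; unfold env_subst; destruct (n <? j); apply meq_refl.
  - change (env_union G1 G2 j) with (G1 j ++ G2 j) in *.
    destruct (tyeqs_map_app_inv _ _ _ Hj) as [ds1 [ds2 [-> [Hj1 Hj2]]]].
    apply Forall_app in Hds as [Hds1 Hds2].
    destruct (Ht _ _ _ Hs j u ds1 Hds1 Hj1) as [G1' [s' [k1' [Hs' [Hss' [HG1 Hk1]]]]]].
    destruct (IH Ht j u ds2 Hds2 Hj2) as [G2' [M' [k2' [HM' [HMM' [HG2 Hk2]]]]]].
    exists (env_union G1' G2'), (s' :: M'), (k1' + k2'); repeat split.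
    + constructor; assumption.
    + constructor; assumption.
    + eapply env_meq_trans; [apply env_meq_union; eassumption | apply env_subst_union].
    + rewrite length_app, size_sum_app; lia.
Qed.

Ltac env_pointwise :=
  intro; cbn [env_sum];
  unfold env_subst, env_lift, env_single, env_union, env_empty;
  decide_nat; rewrite ?app_nil_r; apply meq_refl.

Lemma subst_sound_var x : subst_sound (Var x).
Proof.
  intros G a k H j u ds Hds Hj; inversion H; subst; simpl.
  destruct (Nat.ltb_spec x j); [| destruct (Nat.eqb_spec x j) as [<- |]].
  - rewrite env_single_neq in Hj |- * by lia; apply tyeqs_nil_judgments in Hj as ->.
    exists (env_single x a), a, 1; repeat split; [apply R_var | apply tyeq_refl | env_pointwise].
  - unfold env_single in Hj |- *; rewrite Nat.eqb_refl in Hj |- *.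
    apply tyeqs_single_judgments in Hj as [d [-> Hd]]; inversion Hds; subst.
    exists (env_lift x 0 (jenv d)), (jty d), (jsize d); repeat split.
    + apply rtyp_lift; assumption.
    + exact Hd.
    + env_pointwise.
    + unfold size_sum; simpl; lia.
  - rewrite env_single_neq in Hj |- * by lia; apply tyeqs_nil_judgments in Hj as ->.
    exists (env_single (x - 1) a), a, 1.
    repeat split; [apply R_var | apply tyeq_refl | env_pointwise].
Qed.

Lemma subst_sound_lam t : subst_sound t -> subst_sound (Lam t).
Proof.
  intros IH G a k H j u ds Hds Hj; inversion H as [| ? M M' ? s k0 Ht HM' |]; subst; simpl.
  destruct (IH _ _ _ Ht (S j) u ds Hds Hj) as [G1 [s1 [k1 [Ht1 [Hs1 [HG1 Hk1]]]]]].
  exists (fun n => G1 (S n)), (Arr M s1), (S k1); repeat split.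
  - apply rtyp_lam; [exact Ht1 |].
    eapply msub_trans; [apply msub_meq, (HG1 0) |].
    unfold env_subst; simpl; rewrite app_nil_r; exact HM'.
  - apply tyeq_Arr_r, Hs1.
  - intro n; exact (HG1 (S n)).
  - simpl in Hk1 |- *; lia.
Qed.

Lemma subst_sound_app t u r :
  subst_sound t -> subst_sound u -> subst_sound r -> subst_sound (App t u r).
Proof.
  intros IHt IHu IHr G a k H j v ds Hds Hj.
  inversion H as [| | L tau0 tau1 Gt Gu Gr N ? ? ? ? kt ku kr Ht Hu HN HLr Hr]; subst; simpl.
  change (env_union Gt (env_union Gu (fun n => Gr (S n))) j) with (Gt j ++ Gu j ++ Gr (S j)) in *.
  destruct (tyeqs_map_app_inv _ _ _ Hj) as [ds1 [ds23 [-> [Hj1 Hj23]]]].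
  destruct (tyeqs_map_app_inv _ _ _ Hj23) as [ds2 [ds3 [-> [Hj2 Hj3]]]].
  apply Forall_app in Hds as [Hds1 Hds23]; apply Forall_app in Hds23 as [Hds2 Hds3].
  destruct (rmtyp_subst _ IHt _ _ _ Ht j v ds1 Hds1 Hj1) as [Gt' [Mt [kt' [Ht' [HMt [HGt Hkt]]]]]].
  destruct (rmtyp_subst _ IHu _ _ _ Hu j v ds2 Hds2 Hj2) as [Gu' [N' [ku' [Hu' [HNN' [HGu Hku]]]]]].
  destruct (IHr _ _ _ Hr (S j) v ds3 Hds3 Hj3) as [Gr' [s' [kr' [Hr' [Hs' [HGr Hkr]]]]]].
  destruct (tyeqs_ch_arrows _ _ _ HMt) as [tau0' [L' [-> [HL1 HL2]]]].
  exists (env_union Gt' (env_union Gu' (fun n => Gr' (S n)))), s', (S (kt' + ku' + kr')).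
  repeat split; [| exact Hs' | |].
  - eapply R_app; [exact Ht' | exact Hu' | | | exact Hr'].
    + eapply meq_trans; [apply meq_sym, meq_tyeqs, HNN' |].
      eapply meq_trans; [exact HN | apply meq_ch, HL1].
    + eapply msub_trans; [apply msub_meq, (HGr 0) |].
      unfold env_subst; simpl; rewrite app_nil_r.
      eapply msub_trans; [exact HLr | apply msub_meq, meq_tyeqs, HL2].
  - assert (HGr' : env_meq (fun n => Gr' (S n)) (env_subst j (fun n => Gr (S n)) (env_sum ds3)))
      by (intro n; exact (HGr (S n))).
    eapply env_meq_trans;
      [apply env_meq_union; [exact HGt | apply env_meq_union; [exact HGu | exact HGr']] |].
    eapply env_meq_trans; [apply env_meq_union; [apply env_meq_refl | apply env_subst_union] |].
    apply env_subst_union.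
  - rewrite !length_app, !size_sum_app; lia.
Qed.

Lemma rtyp_subst t : subst_sound t.
Proof.
  induction t; auto using subst_sound_var, subst_sound_lam, subst_sound_app.
Qed.

(** * Contracting a distant redex *)

Definition judgment_shift (d : judgment) : judgment :=
  Judgment (scons [] (jenv d)) (jty d) (jsize d).

Lemma derives_shift u d : derives u d -> derives (lift 1 0 u) (judgment_shift d).
Proof.
  intros Hd; apply (rtyp_env_ext _ _ _ _ _ ((proj1 rtyp_lift) _ _ _ _ Hd 1 0)).
  intros [| n]; unfold env_lift, scons; simpl; rewrite ?Nat.sub_0_r; reflexivity.
Qed.

Lemma env_sum_shift ds n : env_sum (map judgment_shift ds) n = scons [] (env_sum ds) n.
Proof.
  induction ds as [| d ds IH]; [destruct n; reflexivity |].
  simpl; unfold env_union; rewrite IH; destruct n; reflexivity.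
Qed.

Lemma size_sum_shift ds : size_sum (map judgment_shift ds) = size_sum ds.
Proof. unfold size_sum; rewrite map_map; reflexivity. Qed.

Lemma rtyp_plug_redex D t0 : forall G M tau k u ds,
  rtyp G (plug D (Lam t0)) (Arr M tau) k -> Forall (derives u) ds -> msub M (map jty ds) ->
  exists G' tau' k', rtyp G' (plug D (subst (lift (depth D) 0 u) 0 t0)) tau' k' /\
    tyeq tau tau' /\ env_msub G' (env_union G (env_sum ds)) /\ k' < k + size_sum ds.
Proof.
  induction D as [| t1 u1 D IH]; intros G M tau k u ds H Hds HM; simpl in *.
  - inversion H as [| ? ? M' ? ? k0 Ht HM' |]; subst.
    destruct (judgments_select _ _ _ Hds (msub_trans _ _ _ HM' HM))
      as [ds' [Hds' [Hty [Henv Hsize]]]].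
    destruct (rtyp_subst _ _ _ _ Ht 0 u ds' Hds' Hty) as [G1 [tau1 [k1 [Ht1 [Htau [HG1 Hk1]]]]]].
    exists G1, tau1, k1; rewrite lift_0; repeat split; [exact Ht1 | exact Htau | |].
    + intro n; eapply msub_trans; [apply msub_meq, HG1 |].
      unfold env_subst, env_union; simpl; rewrite Nat.sub_0_r.
      apply msub_app; [apply msub_refl | apply Henv].
    + simpl in Hk1; lia.
  - inversion H as [| | L tau0 tau1 Gt Gu Gr N ? ? ? ? kt ku kr Ht Hu HN HLr Hr]; subst.
    assert (Hds' : Forall (derives (lift 1 0 u)) (map judgment_shift ds))
      by (apply Forall_map; eapply Forall_impl; [apply derives_shift | exact Hds]).
    assert (HM' : msub M (map jty (map judgment_shift ds))) by (rewrite map_map; exact HM).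
    destruct (IH _ _ _ _ _ _ Hr Hds' HM') as [Gr' [tau' [kr' [Hr' [Htau [HGr Hkr]]]]]].
    rewrite lift_lift, Nat.add_1_r in Hr'.
    exists (env_union Gt (env_union Gu (fun n => Gr' (S n)))), tau', (S (kt + ku + kr')).
    repeat split; [| exact Htau | |].
    + eapply R_app; [exact Ht | exact Hu | exact HN | | exact Hr'].
      eapply msub_trans; [apply HGr |].
      unfold env_union; rewrite env_sum_shift, app_nil_r; exact HLr.
    + intro n; unfold env_union; rewrite <- !app_assoc.
      do 2 (apply msub_app; [apply msub_refl |]).
      eapply msub_trans; [apply HGr |]; unfold env_union; rewrite env_sum_shift; apply msub_refl.
    + rewrite size_sum_shift in Hkr; lia.
Qed.

(* Each of the length L copies of the abstraction loses its (abs) rule. *)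
Lemma contract_redexes D t0 u : forall L dts dss,
  Forall (derives (plug D (Lam t0))) dts -> tyeqs (map arrow L) (map jty dts) ->
  Forall2 (fun M ds => tyeqs M (map jty ds)) (map fst L) dss -> Forall (derives u) (concat dss) ->
  exists dws, Forall (derives (plug D (subst (lift (depth D) 0 u) 0 t0))) dws /\
    tyeqs (map snd L) (map jty dws) /\
    env_msub (env_sum dws) (env_union (env_sum dts) (env_sum (concat dss))) /\
    size_sum dws + length L <= size_sum dts + size_sum (concat dss).
Proof.
  induction L as [| p L IH]; intros dts dss Hdts Hty Hdss Hu.
  - apply tyeqs_nil_judgments in Hty as ->; inversion Hdss; subst.
    exists []; repeat split; try constructor; intro n; apply msub_nil.
  - destruct dts as [| d dts]; inversion Hty as [| ? ? ? ? Hd Hty']; subst.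
    inversion Hdss as [| ? ds ? dss' Hds Hdss']; subst.
    inversion Hdts as [| ? ? Hd0 Hdts']; subst.
    simpl in Hu; apply Forall_app in Hu as [Hu1 Hu2].
    destruct (IH _ _ Hdts' Hty' Hdss' Hu2) as [dws [Hdws [Htyw [Henvw Hsizew]]]].
    destruct (tyeq_Arr_inv _ _ _ Hd) as [N [s' [Ed [HN Hs']]]].
    unfold derives in Hd0; rewrite Ed in Hd0.
    assert (HNds : msub N (map jty ds))
      by (apply msub_meq; eauto using meq_trans, meq_sym, meq_tyeqs).
    destruct (rtyp_plug_redex _ _ _ _ _ _ _ _ Hd0 Hu1 HNds)
      as [G1 [tau1 [k1 [Hw [Htau [HG1 Hk1]]]]]].
    exists (Judgment G1 tau1 k1 :: dws); repeat split.
    + constructor; assumption.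
    + constructor; [eapply tyeq_trans; eassumption | assumption].
    + intro n; simpl; unfold env_union; rewrite env_sum_app.
      eapply msub_trans; [apply msub_app; [apply HG1 | apply Henvw] |].
      unfold env_union; apply msub_perm; rewrite <- !app_assoc.
      apply Permutation_app_head, Permutation_app_swap_app.
    + simpl concat; rewrite !size_sum_cons, size_sum_app; simpl in *; lia.
Qed.

(** * Subject reduction *)

Definition typing_decreases (t t' : term) : Prop :=
  forall G a k, rtyp G t a k ->
  exists G' a' k', rtyp G' t' a' k' /\ k' < k /\ env_msub G' G /\ tyeq a a'.

Lemma dbeta_root_decreases t t' : dbeta_root t t' -> typing_decreases t t'.
Proof.
  intros [D t0 u r] G a k H.
  inversion H as [| | L tau0 tau1 Gt Gu Gr N ? ? ? ? kt ku kr Ht Hu HN HLr Hr]; subst.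
  destruct (rmtyp_select _ _ _ _ _ Ht (msub_ch tau0 _)) as [dts [Hdts [Htyt [Henvt Hkt]]]].
  assert (HC : msub (concat (map fst L)) N)
    by (eapply msub_trans; [apply msub_ch | apply msub_meq, meq_sym, HN]).
  destruct (rmtyp_select _ _ _ _ _ Hu HC) as [dus [Hdus [Htyu [Henvu Hku]]]].
  destruct (tyeqs_concat_judgments _ _ Htyu) as [dss [-> Hdss]].
  destruct (contract_redexes _ _ _ _ _ _ Hdts Htyt Hdss Hdus) as [dws [Hdws [Htyw [Henvw Hkw]]]].
  assert (HLw : msub (Gr 0) (map jty dws))
    by (eapply msub_trans; [exact HLr | apply msub_meq, meq_tyeqs, Htyw]).
  destruct (judgments_select _ _ _ Hdws HLw) as [dw [Hdw [Htydw [Henvdw Hkdw]]]].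
  destruct (rtyp_subst _ _ _ _ Hr 0 _ dw Hdw Htydw) as [G1 [s1 [k1 [Hr1 [Hs1 [HG1 Hk1]]]]]].
  exists G1, s1, k1; repeat split; [exact Hr1 | lia | | exact Hs1].
  intro n; eapply msub_trans; [apply msub_meq, HG1 |].
  unfold env_subst, env_union; simpl; rewrite Nat.sub_0_r.
  eapply msub_trans; [| rewrite app_assoc; apply msub_perm, Permutation_app_comm].
  apply msub_app; [apply msub_refl |].
  eapply msub_trans; [apply Henvdw |]; eapply msub_trans; [apply Henvw |].
  apply msub_app; [apply Henvt | apply Henvu].
Qed.

Lemma rmtyp_decreases t t' : typing_decreases t t' ->
  forall G M k, rmtyp G t M k ->
  exists G' M' k', rmtyp G' t' M' k' /\ k' + length M <= k /\ env_msub G' G /\ tyeqs M M'.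
Proof.
  intros Htt' G M k H; induction H as [t | G1 G2 t s M k1 k2 Hs _ IH].
  - exists env_empty, [], 0; repeat split; try constructor; intro n; apply msub_refl.
  - destruct (Htt' _ _ _ Hs) as [G1' [s' [k1' [Hs' [Hk1 [HG1 Hss']]]]]].
    destruct (IH Htt') as [G2' [M' [k2' [HM' [Hk2 [HG2 HMM']]]]]].
    exists (env_union G1' G2'), (s' :: M'), (k1' + k2'); repeat split.
    + constructor; assumption.
    + simpl; lia.
    + intro n; apply msub_app; auto.
    + constructor; assumption.
Qed.

Lemma lam_decreases t t' : typing_decreases t t' -> typing_decreases (Lam t) (Lam t').
Proof.
  intros IH G a k H; inversion H as [| ? M M' ? s k0 Ht HM' |]; subst.
  destruct (IH _ _ _ Ht) as [G1 [s1 [k1 [Ht1 [Hk1 [HG1 Hs1]]]]]].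
  exists (fun n => G1 (S n)), (Arr M s1), (S k1); repeat split.
  - apply rtyp_lam; [exact Ht1 | eapply msub_trans; [apply (HG1 0) | exact HM']].
  - lia.
  - intro n; apply (HG1 (S n)).
  - apply tyeq_Arr_r, Hs1.
Qed.

Lemma app_head_decreases t t' u r :
  typing_decreases t t' -> typing_decreases (App t u r) (App t' u r).
Proof.
  intros IH G a k H.
  inversion H as [| | L tau0 tau1 Gt Gu Gr N ? ? ? ? kt ku kr Ht Hu HN HLr Hr]; subst.
  destruct (rmtyp_decreases _ _ IH _ _ _ Ht) as [Gt' [Mt [kt' [Ht' [Hkt [HGt HMt]]]]]].
  destruct (tyeqs_ch_arrows _ _ _ HMt) as [tau0' [L' [-> [HL1 HL2]]]].
  exists (env_union Gt' (env_union Gu (fun n => Gr (S n)))), a, (S (kt' + ku + kr)); repeat split.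
  - eapply R_app; [exact Ht' | exact Hu | | | exact Hr].
    + eapply meq_trans; [exact HN | apply meq_ch, HL1].
    + eapply msub_trans; [exact HLr | apply msub_meq, meq_tyeqs, HL2].
  - assert (length (ch tau0 (map arrow L)) > 0) by (destruct L; simpl; lia); lia.
  - intro n; apply msub_app; [apply HGt | apply msub_refl].
  - apply tyeq_refl.
Qed.

Lemma app_arg_decreases t u u' r :
  typing_decreases u u' -> typing_decreases (App t u r) (App t u' r).
Proof.
  intros IH G a k H.
  inversion H as [| | L tau0 tau1 Gt Gu Gr N ? ? ? ? kt ku kr Ht Hu HN HLr Hr]; subst.
  destruct (rmtyp_decreases _ _ IH _ _ _ Hu) as [Gu' [N' [ku' [Hu' [Hku [HGu HNN']]]]]].
  exists (env_union Gt (env_union Gu' (fun n => Gr (S n)))), a, (S (kt + ku' + kr)); repeat split.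
  - eapply R_app; [exact Ht | exact Hu' | | exact HLr | exact Hr].
    eapply meq_trans; [apply meq_sym, meq_tyeqs, HNN' | exact HN].
  - assert (length N > 0)
      by (rewrite (meq_length _ _ HN); destruct (concat (map fst L)); simpl; lia); lia.
  - intro n; apply msub_app; [apply msub_refl | apply msub_app; [apply HGu | apply msub_refl]].
  - apply tyeq_refl.
Qed.

Lemma app_body_decreases t u r r' :
  typing_decreases r r' -> typing_decreases (App t u r) (App t u r').
Proof.
  intros IH G a k H.
  inversion H as [| | L tau0 tau1 Gt Gu Gr N ? ? ? ? kt ku kr Ht Hu HN HLr Hr]; subst.
  destruct (IH _ _ _ Hr) as [Gr' [s' [kr' [Hr' [Hkr [HGr Hs']]]]]].
  exists (env_union Gt (env_union Gu (fun n => Gr' (S n)))), s', (S (kt + ku + kr')); repeat split.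
  - eapply R_app; [exact Ht | exact Hu | exact HN | | exact Hr'].
    eapply msub_trans; [apply (HGr 0) | exact HLr].
  - lia.
  - intro n; do 2 (apply msub_app; [apply msub_refl |]); apply HGr.
  - exact Hs'.
Qed.

Lemma dbeta_decreases t t' : dbeta t t' -> typing_decreases t t'.
Proof.
  induction 1; auto using dbeta_root_decreases, lam_decreases,
    app_head_decreases, app_arg_decreases, app_body_decreases.
Qed.

Lemma rtyp_SN_maxred k : forall G t s, rtyp G t s k -> SN t /\ maxred_le t k.
Proof.
  induction k as [k IH] using lt_wf_ind; intros G t s H; split.
  - constructor; intros t' Hstep.
    destruct (dbeta_decreases _ _ Hstep _ _ _ H) as [G' [s' [k' [H' [Hk _]]]]].
    exact (proj1 (IH k' Hk _ _ _ H')).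
  - intros n t'' Hn; inversion Hn as [| n' ? t' ? Hstep Hn']; subst; [lia |].
    destruct (dbeta_decreases _ _ Hstep _ _ _ H) as [G' [s' [k' [H' [Hk _]]]]].
    specialize (proj2 (IH k' Hk _ _ _ H') n' t'' Hn'); lia.
Qed.

Theorem mainTheorem9 (G : env) (t : term) (s : ty) (k : nat) :
  typ G t s k -> SN t /\ maxred_le t k.
Proof.
  intros H; exact (rtyp_SN_maxred k G t s (proj1 typ_rtyp _ _ _ _ H)).
Qed.
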